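(* Let $P(X,Y,Z)=X+\frac{1}{X}+Y+\frac{1}{Y}+Z+\frac{1}{Z}-2$ and let $D_P=\{(X,Y,Z)\in(\mathbb{C}^\times)^3 : P(X,Y,Z)=0,\ |X|=|Y|=1,\ |Z|>1\}$. Then \[ D_P=\{(e^{i\phi},e^{i\psi},Z(\phi,\psi)) : \cos\phi+\cos\psi<0\},\quad Z(\phi,\psi)=1-\cos\phi-\cos\psi+\sqrt{(1-\cos\phi-\cos\psi)^2-1}. \] *)

From Stdlib Require Import Reals.
From Coquelicot Require Import Coquelicot.
Open Scope C_scope.

Definition P (X Y Z : C) : C :=
  X + / X + Y + / Y + Z + / Z - RtoC 2.

Definition D_P (X Y Z : C) : Prop :=
  X <> 0 /\ Y <> 0 /\ Z <> 0 /\ P X Y Z = 0 /\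
  Cmod X = 1%R /\ Cmod Y = 1%R /\ (Cmod Z > 1)%R.

Definition expi (phi : R) : C := (cos phi, sin phi).

Definition Zfun (phi psi : R) : C :=
  RtoC (1 - cos phi - cos psi + sqrt ((1 - cos phi - cos psi)^2 - 1))%R.

(* On the unit circle X + 1/X = 2 cos phi, so P = 0 says Z + 1/Z = 2a with
   a = 1 - cos phi - cos psi >= -1.  Since Im (Z + 1/Z) = Im Z (1 - 1/|Z|^2),
   the condition |Z| > 1 forces Z to be real; a real u with |u| > 1 and
   u + 1/u = 2a exists only when a > 1, and it is then the larger root
   a + sqrt (a^2 - 1) of u^2 - 2 a u + 1 = 0, i.e. cos phi + cos psi < 0. *)
From Stdlib Require Import Reals Lra Psatz.
From Coquelicot Require Import Coquelicot.

Local Open Scope C_scope.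

Lemma Cmod_expi (phi : R) : Cmod (expi phi) = 1%R.
Proof.
  unfold Cmod, expi; cbn [fst snd].
  rewrite <- sqrt_1; f_equal.
  pose proof (sin2_cos2 phi); unfold Rsqr in *; lra.
Qed.

Lemma expi_neq0 (phi : R) : expi phi <> 0.
Proof.
  intros E; pose proof (Cmod_expi phi) as H.
  rewrite E, Cmod_0 in H; lra.
Qed.

Lemma Cmod_eq1_expi (z : C) : Cmod z = 1%R -> exists phi, z = expi phi.
Proof.
  destruct z as [x y]; unfold Cmod; cbn [fst snd]; intros H.
  assert (Hxy : (x^2 + y^2 = 1)%R).
  { rewrite <- (sqrt_sqrt (x^2 + y^2)) by nra; rewrite H; ring. }
  assert (Hb : (-1 <= x <= 1)%R) by (split; nra).
  unfold expi.
  destruct (Rle_lt_dec 0 y) as [Hy | Hy].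
  - exists (acos x).
    rewrite cos_acos, sin_acos by exact Hb.
    replace (1 - x²)%R with (y²) by (unfold Rsqr; nra).
    now rewrite sqrt_Rsqr.
  - exists (- acos x)%R.
    rewrite cos_neg, sin_neg, cos_acos, sin_acos by exact Hb.
    replace (1 - x²)%R with ((- y)²) by (unfold Rsqr; nra).
    rewrite sqrt_Rsqr by lra; f_equal; ring.
Qed.

Lemma expi_Cplus_Cinv (phi : R) : expi phi + / expi phi = RtoC (2 * cos phi).
Proof.
  pose proof (sin2_cos2 phi) as H; unfold Rsqr in H.
  unfold expi, Cinv, Cplus, RtoC; cbn [fst snd].
  replace (cos phi ^ 2 + sin phi ^ 2)%R with 1%R by lra.
  f_equal; field.
Qed.

Lemma P_expi (phi psi : R) (Z : C) :
  P (expi phi) (expi psi) Z = Z + / Z - RtoC (2 * (1 - cos phi - cos psi)).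
Proof.
  unfold P; rewrite expi_Cplus_Cinv, <- (Cplus_assoc _ (expi psi)), expi_Cplus_Cinv.
  rewrite !RtoC_mult, !RtoC_minus; ring.
Qed.

Lemma Cplus_Cinv_real (z : C) (r : R) :
  Cmod z <> 1%R -> z + / z = RtoC r -> z = RtoC (Re z).
Proof.
  destruct z as [u v]; unfold Cmod, Re, RtoC; cbn [fst snd]; intros Hm E.
  apply (f_equal snd) in E; unfold Cinv, Cplus in E; cbn [fst snd] in E.
  assert (Hm1 : (u^2 + v^2 <> 1)%R) by (intro H; apply Hm; rewrite H; apply sqrt_1).
  destruct (Req_dec (u^2 + v^2) 0) as [H0 | H0]; [f_equal; nra |].
  assert (Hv : (v * (u^2 + v^2 - 1) = 0)%R).
  { replace (v * (u^2 + v^2 - 1))%R with ((u^2 + v^2) * (v + - v / (u^2 + v^2)))%R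
      by (field; exact H0).
    rewrite E; ring. }
  apply Rmult_integral in Hv as [-> | Hv]; [reflexivity | lra].
Qed.

Lemma Rplus_Rinv_eq_iff (a u : R) : (-1 <= a)%R ->
  (1 < Rabs u /\ u + / u = 2 * a <-> 1 < a /\ u = a + sqrt (a ^ 2 - 1))%R.
Proof.
  intros Ha; split.
  - intros [Hu E].
    assert (Hu0 : u <> 0%R) by (intros ->; rewrite Rabs_R0 in Hu; lra).
    assert (Hq : (u^2 - 2 * a * u + 1 = 0)%R).
    { rewrite <- E; field; exact Hu0. }
    assert (Hu1 : (1 < u)%R).
    { destruct (Rlt_or_le u 0) as [Hn | Hp]; [| rewrite Rabs_right in Hu; lra].
      (* u < -1 would give u + 1/u < -2 <= 2a *)
      rewrite Rabs_left in Hu by lra; nra. }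
    assert (Hsq : (0 < (u - 1) * (u - 1))%R) by (apply Rmult_lt_0_compat; lra).
    split; [nra |].
    assert (Hs : sqrt (a^2 - 1) = (u - a)%R) by (apply sqrt_lem_1; nra).
    rewrite Hs; ring.
  - intros [Ha1 ->].
    assert (Hd : (0 <= a^2 - 1)%R) by nra.
    pose proof (sqrt_sqrt _ Hd); pose proof (sqrt_pos (a^2 - 1)).
    assert (Hinv : (/ (a + sqrt (a^2 - 1)) = a - sqrt (a^2 - 1))%R).
    { apply Rmult_eq_reg_l with (a + sqrt (a^2 - 1))%R; [| lra].
      rewrite Rinv_r by lra; nra. }
    rewrite Rabs_right, Hinv by lra; split; lra.
Qed.

Theorem lemma2p2 : forall X Y Z : C,
  D_P X Y Z <->
  exists phi psi : R,
    (cos phi + cos psi < 0)%R /\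
    X = expi phi /\ Y = expi psi /\ Z = Zfun phi psi.
Proof.
  intros X Y Z; unfold D_P; split.
  - intros (_ & _ & _ & HP & HX & HY & HZ).
    destruct (Cmod_eq1_expi X HX) as [phi ->].
    destruct (Cmod_eq1_expi Y HY) as [psi ->].
    set (a := (1 - cos phi - cos psi)%R).
    assert (Ha : (-1 <= a)%R) by (unfold a; pose proof (COS_bound phi); pose proof (COS_bound psi); lra).
    assert (HJ : Z + / Z = RtoC (2 * a)).
    { apply Ceq_minus; rewrite <- HP, P_expi; reflexivity. }
    assert (Zreal : Z = RtoC (Re Z)).
    { apply (Cplus_Cinv_real _ _ (Rgt_not_eq _ _ HZ) HJ). }
    rewrite Zreal, Cmod_R in HZ.
    rewrite Zreal, <- RtoC_inv, <- RtoC_plus in HJ by (intro E; rewrite E, Rabs_R0 in HZ; lra).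
    apply RtoC_inj in HJ.
    destruct (proj1 (Rplus_Rinv_eq_iff a (Re Z) Ha) (conj HZ HJ)) as [Ha1 Hu].
    exists phi, psi; repeat split; [unfold a in Ha1; lra |].
    rewrite Zreal, Hu; reflexivity.
  - intros (phi & psi & Hc & -> & -> & ->).
    set (a := (1 - cos phi - cos psi)%R).
    assert (Ha1 : (1 < a)%R) by (unfold a; lra).
    destruct (proj2 (Rplus_Rinv_eq_iff a (a + sqrt (a ^ 2 - 1)) ltac:(lra))
                (conj Ha1 eq_refl)) as [HZ HJ].
    unfold Zfun; fold a.
    repeat split; try apply expi_neq0; try apply Cmod_expi.
    + intro E; apply (f_equal Cmod) in E; rewrite Cmod_R, Cmod_0 in E; lra.
    + rewrite P_expi, <- RtoC_inv, <- RtoC_plus, HJ by (intro E; rewrite E, Rabs_R0 in HZ; lra).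
      now apply (proj1 (Ceq_minus _ _)).
    + rewrite Cmod_R; exact HZ.
Qed.
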